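(* Let $M$ be an extremally $\aleph_0$-saturated model of a complete affine theory $T$ and let $P:M^n\to\mathbb R$ be a definable predicate such that for all $\bar x,\bar y\in M^n$: (i) $0\le P(\bar x)$; (ii) $P(\bar x)-P(\bar y)\le d(\bar x,\bar y)$; (iii) for all reals $r,s\ge0$, $0\le\inf_{\bar x}\sup_{\bar y}\,[sP(\bar x)-rP(\bar y)-s\,d(\bar x,\bar y)]$ holds in $M$. Then $D=Z(P)=\{\bar a\in M^n:P(\bar a)=0\}$ is nonempty and $P(\bar x)=d(\bar x,D)$ for all $\bar x\in M^n$ (so $D$ is definable).
   Context: Affine continuous logic: $L$-structures are complete metric spaces $(M,d)$ with $d\le1$ and Lipschitz interpretations of function symbols and $[0,1]$-valued relation symbols; $M^n$ carries the metric $d(\bar x,\bar y)=\sum_id(x_i,y_i)$. Affine formulas are built from $1$ and atomic formulas (including $d$) using only $r\cdot\phi$ ($r\in\mathbb R$), $\phi+\psi$, $\inf_x$, $\sup_x$. $T$ is complete: for each sentence $\phi$ there is a unique $r$ with $T\models\phi=r$. For $A\subseteq M$, an $n$-type over $A$ is a maximal set of conditions with parameters from $A$ satisfiable with the theory of $(M,a)_{a\in A}$, identified with a positive normalized linear functional on formulas; $S_n(A)$ is the convex set of such types; a type is extreme if it is an extreme point of $S_n(A)$. $M$ is extremally $\aleph_0$-saturated if for every finite $A\subseteq M$ every extreme type in $S_n(A)$ is realized in $M$. A predicate $P:M^n\to\mathbb R$ is definable (without parameters) if it is a uniform limit of $\phi_k^M$ for affine formulas $\phi_k$. A closed $D\subseteq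 M^n$ is definable if $\bar x\mapsto d(\bar x,D)=\inf_{\bar a\in D}d(\bar x,\bar a)$ is definable. *)

From mathcomp Require Import all_boot all_order all_algebra.
From mathcomp Require Import all_classical all_reals.
From mathcomp Require Import Rstruct.

Set Implicit Arguments. Unset Strict Implicit. Unset Printing Implicit Defensive.
Import Order.TTheory GRing.Theory Num.Theory.
Local Open Scope ring_scope.
Local Open Scope classical_set_scope.

Notation R := Rdefinitions.R.

Record language := Language {
  fsym : Type; farity : fsym -> nat;
  rsym : Type; rarity : rsym -> nat }.

Definition tdist (M : Type) (d : M -> M -> R) (n : nat) (x y : 'I_n -> M) : R :=
  \sum_(i < n) d (x i) (y i).

Record structure (L : language) := Structure {
  carrier :> Type;
  dist : carrier -> carrier -> R;
  dist_ge0 : forall x y, 0 <= dist x y;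
  dist_le1 : forall x y, dist x y <= 1;
  dist_refl : forall x, dist x x = 0;
  dist_sep : forall x y, dist x y = 0 -> x = y;
  dist_sym : forall x y, dist x y = dist y x;
  dist_tri : forall x y z, dist x z <= dist x y + dist y z;
  dist_complete : forall u : nat -> carrier,
    (forall eps : R, 0 < eps -> exists N : nat, forall m k : nat,
        (N <= m)%N -> (N <= k)%N -> dist (u m) (u k) < eps) ->
    exists l : carrier, forall eps : R, 0 < eps -> exists N : nat,
        forall m : nat, (N <= m)%N -> dist (u m) l < eps;
  carrier_inhabited : inhabited carrier;
  fun_interp : forall f : fsym L, ('I_(farity f) -> carrier) -> carrier;
  fun_lip : forall f : fsym L, exists c : R, forall x y : 'I_(farity f) -> carrier,
    dist (fun_interp x) (fun_interp y) <= c * tdist dist x y;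
  rel_interp : forall r : rsym L, ('I_(rarity r) -> carrier) -> R;
  rel_range : forall (r : rsym L) (x : 'I_(rarity r) -> carrier), 0 <= @rel_interp r x <= 1;
  rel_lip : forall r : rsym L, exists c : R, forall x y : 'I_(rarity r) -> carrier,
    `|@rel_interp r x - @rel_interp r y| <= c * tdist dist x y }.

Inductive term (L : language) (P : Type) : Type :=
  | TVar : nat -> term L P
  | TPar : P -> term L P
  | TApp : forall f : fsym L, ('I_(farity f) -> term L P) -> term L P.

Inductive formula (L : language) (P : Type) : Type :=
  | FOne : formula L P
  | FRel : forall r : rsym L, ('I_(rarity r) -> term L P) -> formula L P
  | FDist : term L P -> term L P -> formula L P
  | FScale : R -> formula L P -> formula L P
  | FAdd : formula L P -> formula L P -> formula L P
  | FInf : nat -> formula L P -> formula L P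
  | FSup : nat -> formula L P -> formula L P.

Arguments TVar {L P}. Arguments TPar {L P}. Arguments TApp {L P}.
Arguments FOne {L P}. Arguments FRel {L P}. Arguments FDist {L P}.
Arguments FScale {L P}. Arguments FAdd {L P}. Arguments FInf {L P}.
Arguments FSup {L P}.

Fixpoint term_fv_ok (L : language) (P : Type) (ok : nat -> bool) (t : term L P)
  : Prop :=
  match t with
  | TVar i => ok i
  | TPar _ => True
  | TApp f args => forall j, term_fv_ok ok (args j)
  end.

Fixpoint fv_ok (L : language) (P : Type) (ok : nat -> bool) (phi : formula L P)
  : Prop :=
  match phi with
  | FOne => True
  | FRel r args => forall j, term_fv_ok ok (args j)
  | FDist t1 t2 => term_fv_ok ok t1 /\ term_fv_ok ok t2
  | FScale _ psi => fv_ok ok psi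
  | FAdd psi chi => fv_ok ok psi /\ fv_ok ok chi
  | FInf i psi => fv_ok (fun k => (k == i) || ok k) psi
  | FSup i psi => fv_ok (fun k => (k == i) || ok k) psi
  end.

Definition fv_lt (L : language) (P : Type) (n : nat) (phi : formula L P) : Prop :=
  fv_ok (fun k => (k < n)%N) phi.

Definition upd (M : Type) (e : nat -> M) (i : nat) (m : M) : nat -> M :=
  fun k => if k == i then m else e k.

Fixpoint teval (L : language) (M : structure L) (P : Type) (a : P -> M)
  (e : nat -> M) (t : term L P) : M :=
  match t with
  | TVar i => e i
  | TPar p => a p
  | TApp f args => fun_interp (fun j => teval a e (args j))
  end.

Fixpoint feval (L : language) (M : structure L) (P : Type) (a : P -> M)
  (e : nat -> M) (phi : formula L P) : R :=
  match phi with
  | FOne => 1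
  | FRel r args => rel_interp (fun j => teval a e (args j))
  | FDist t1 t2 => dist (teval a e t1) (teval a e t2)
  | FScale c psi => c * feval a e psi
  | FAdd psi chi => feval a e psi + feval a e chi
  | FInf i psi => inf [set feval a (upd e i m) psi | m in [set: carrier M]]
  | FSup i psi => sup [set feval a (upd e i m) psi | m in [set: carrier M]]
  end.

Definition extends (M : Type) (n : nat) (e : nat -> M) (x : 'I_n -> M) : Prop :=
  forall i : 'I_n, e i = x i.

(* ---------- Types over a finite parameter tuple a : 'I_k -> M ----------
   An n-type over A = {a_0,...,a_(k-1)} is a positive normalized linear
   functional on the affine formulas with free variables among x_0..x_(n-1)
   and parameters from A. *)
Definition is_type (L : language) (M : structure L) (k : nat) (a : 'I_k -> M)
  (n : nat) (p : formula L 'I_k -> R) : Prop :=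
  [/\ p FOne = 1,
      (forall c phi, fv_lt n phi -> p (FScale c phi) = c * p phi),
      (forall phi psi, fv_lt n phi -> fv_lt n psi ->
          p (FAdd phi psi) = p phi + p psi) &
      (forall phi, fv_lt n phi -> (forall e, 0 <= feval a e phi) -> 0 <= p phi)].

Definition is_extreme_type (L : language) (M : structure L) (k : nat)
  (a : 'I_k -> M) (n : nat) (p : formula L 'I_k -> R) : Prop :=
  is_type a n p /\
  forall (q1 q2 : formula L 'I_k -> R) (t : R), 0 < t < 1 ->
    is_type a n q1 -> is_type a n q2 ->
    (forall phi, fv_lt n phi -> p phi = t * q1 phi + (1 - t) * q2 phi) ->
    forall phi, fv_lt n phi -> q1 phi = q2 phi.

Definition realized (L : language) (M : structure L) (k : nat) (a : 'I_k -> M)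
  (n : nat) (p : formula L 'I_k -> R) : Prop :=
  exists b : 'I_n -> M, forall e : nat -> M, extends e b ->
    forall phi, fv_lt n phi -> p phi = feval a e phi.

Definition extremally_aleph0_saturated (L : language) (M : structure L) : Prop :=
  forall (k : nat) (a : 'I_k -> M) (n : nat) (p : formula L 'I_k -> R),
    is_extreme_type a n p -> realized a n p.

Definition definable_pred (L : language) (M : structure L) (n : nat)
  (Pr : ('I_n -> M) -> R) : Prop :=
  exists phi : nat -> formula L void,
    (forall j, fv_lt n (phi j)) /\
    forall eps : R, 0 < eps -> exists N : nat, forall j : nat, (N <= j)%N ->
      forall (x : 'I_n -> M) (e : nat -> M), extends e x ->
        `|Pr x - feval (fun v : void => match v with end) e (phi j)| <= eps.

Definition mdist (L : language) (M : structure L) (n : nat)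
  (x y : 'I_n -> M) : R := tdist (@dist L M) x y.

Definition dist_to_set (L : language) (M : structure L) (n : nat)
  (x : 'I_n -> M) (D : set ('I_n -> M)) : R :=
  inf [set mdist x y | y in D].

From mathcomp Require Import all_boot all_order all_algebra.
From mathcomp Require Import all_classical all_reals.
From mathcomp Require Import Rstruct.
From mathcomp Require Import ring lra.
Import Order.TTheory GRing.Theory Num.Theory.
Local Open Scope ring_scope.
Local Open Scope classical_set_scope.

(* Condition (iii) with s = 1 and r = (P x + d) / d says that from any x one
   can jump, at cost at most P x + d, to a point where P is at most d.  Jumping
   with d = e / 2^k at the k-th step gives a sequence which is Cauchy because
   its steps shrink geometrically; its limit lies in Z(P) at distance at most
   P x + 5 e from x.  Together with the 1-Lipschitz bound P x <= d(x, a) for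
   a in Z(P) this gives P x = d(x, Z(P)). *)

Lemma geometric_lt {K : archiRealFieldType} (c d : K) :
  0 < d -> exists k : nat, c / 2 ^+ k < d.
Proof.
move=> d_gt0; exists (Num.bound (c / d)).
have := upper_nthrootP (leqnn (Num.bound (c / d))).
by rewrite ltr_pdivrMr // ltr_pdivrMr ?exprn_gt0 // mulrC.
Qed.

Lemma le0_geometric {K : archiRealFieldType} (a c : K) :
  (forall k : nat, a <= c / 2 ^+ k) -> a <= 0.
Proof.
move=> le_a; rewrite leNgt; apply/negP => a_gt0.
by have [k] := geometric_lt c _ a_gt0; rewrite ltNge le_a.
Qed.

Lemma inf_sup_ge0_witness {K : realType} {T U : Type}
  {f : T -> U -> K} {b : K} :
  (forall x, has_ubound [set f x y | y in [set: U]]) ->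
  (forall x, exists y, b <= f x y) ->
  0 <= inf [set sup [set f x y | y in [set: U]] | x in [set: T]] ->
  forall x eps, 0 < eps -> exists y, - eps < f x y.
Proof.
move=> ub lb inf_ge0 x eps eps_gt0.
have has_supf z : has_sup [set f z y | y in [set: U]].
  by split; [have [y _] := lb z; exists (f z y), y | exact: ub].
have sup_ge0 : 0 <= sup [set f x y | y in [set: U]].
  apply: le_trans inf_ge0 (ge_inf _ _); last by exists x.
  exists b => _ [z _ <-]; have [y le_b] := lb z.
  by apply: le_trans le_b (sup_upper_bound (has_supf z) _); exists y.
have [_ [y _ <-] lt_f] := sup_adherent eps_gt0 (has_supf x).
by exists y; lra.
Qed.

Section ProductMetric.
Context {L : language} {M : structure L} {n : nat}.
Implicit Types (x y z : 'I_n -> M) (u : nat -> 'I_n -> M).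

Lemma mdist_ge0 x y : 0 <= mdist x y.
Proof. by apply: sumr_ge0 => i _; apply: dist_ge0. Qed.

Lemma mdist_refl x : mdist x x = 0.
Proof. by rewrite /mdist /tdist big1 // => i _; rewrite dist_refl. Qed.

Lemma mdist_sym x y : mdist x y = mdist y x.
Proof. by apply: eq_bigr => i _; rewrite dist_sym. Qed.

Lemma mdist_tri x y z : mdist x z <= mdist x y + mdist y z.
Proof.
by rewrite /mdist /tdist -big_split; apply: ler_sum => i _; apply: dist_tri.
Qed.

Lemma dist_le_mdist x y i : dist (x i) (y i) <= mdist x y.
Proof.
rewrite /mdist /tdist (bigD1 i) //= lerDl.
by apply: sumr_ge0 => j _; apply: dist_ge0.
Qed.

Lemma mdist_le_coord x y (c : R) :
  (forall i, dist (x i) (y i) <= c) -> mdist x y <= n%:R * c.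
Proof.
move=> le_c; apply: le_trans (ler_sum _ (fun i _ => le_c i)) _.
by rewrite sumr_const card_ord mulr_natl.
Qed.

Lemma mdist_le_dim x y : mdist x y <= n%:R.
Proof.
by rewrite -[leRHS]mulr1; apply: mdist_le_coord => i; apply: dist_le1.
Qed.

Definition mcauchy u := forall eps : R, 0 < eps ->
  exists N : nat, forall m k, (N <= m)%N -> (N <= k)%N ->
    mdist (u m) (u k) < eps.

Definition mconverges u l := forall eps : R, 0 < eps ->
  exists N : nat, forall m, (N <= m)%N -> mdist (u m) l <= eps.

(* Each coordinate converges; a common index is the maximum of the finitely
   many coordinate indices. *)
Lemma mdist_complete {u} : mcauchy u -> exists l, mconverges u l.
Proof.
move=> cau_u.
have cau_coord i : forall eps : R, 0 < eps -> exists N : nat, forall m k,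
    (N <= m)%N -> (N <= k)%N -> dist (u m i) (u k i) < eps.
  move=> eps /cau_u [N cauN]; exists N => m k Nm Nk.
  exact: le_lt_trans (dist_le_mdist _ _ i) (cauN m k Nm Nk).
have [l lim_l] := choice (fun i => dist_complete (cau_coord i)).
exists l => eps eps_gt0.
have eps'_gt0 : 0 < eps / n.+1%:R by rewrite divr_gt0.
have [N lim_N] := choice (fun i => lim_l i _ eps'_gt0).
exists (\max_i N i) => m le_m.
have : mdist (u m) l <= n%:R * (eps / n.+1%:R).
  apply: mdist_le_coord => i; apply/ltW/lim_N.
  exact: leq_trans (leq_bigmax i) le_m.
move/le_trans; apply.
by rewrite mulrA ler_pdivrMr // mulrC ler_wpM2l ?ler_nat // ltW.
Qed.

Lemma mdist_geometric_tail {u} {c : R} :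
  (forall k, mdist (u k) (u k.+1) <= c / 2 ^+ k) ->
  forall k m, (k <= m)%N -> mdist (u k) (u m) <= 2 * c / 2 ^+ k.
Proof.
move=> step k m /subnKC <-.
have c_ge0 : 0 <= c.
  by have := step 0%N; rewrite expr0 divr1; apply: le_trans (mdist_ge0 _ _).
suff tail i :
    mdist (u k) (u (k + i)%N) <= 2 * c / 2 ^+ k - 2 * c / 2 ^+ (k + i).
  apply: le_trans (tail _) _; rewrite lerBlDr lerDl.
  by rewrite divr_ge0 ?exprn_ge0 ?mulr_ge0.
elim: i => [|i IH]; first by rewrite addn0 mdist_refl subrr.
rewrite addnS; apply: le_trans (mdist_tri _ (u (k + i)%N) _) _.
have halve : c / 2 ^+ (k + i) = 2 * c / 2 ^+ (k + i) - 2 * c / 2 ^+ (k + i).+1.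
  by rewrite exprS; field; rewrite gt_eqF ?exprn_gt0.
have := step (k + i)%N; lra.
Qed.

Lemma geometric_mcauchy {u} {c : R} :
  (forall k, mdist (u k) (u k.+1) <= c / 2 ^+ k) -> mcauchy u.
Proof.
move=> step eps eps_gt0; have [N small] := geometric_lt (4 * c) _ eps_gt0.
exists N => m k Nm Nk; apply: le_lt_trans (mdist_tri _ (u N) _) _.
rewrite mdist_sym.
have := mdist_geometric_tail step _ _ Nm.
have := mdist_geometric_tail step _ _ Nk.
lra.
Qed.

Lemma mconverges_mdist_le {u l y} {c : R} (N : nat) : mconverges u l ->
  (forall m, (N <= m)%N -> mdist (u m) y <= c) -> mdist l y <= c.
Proof.
move=> lim_l le_c; apply/ler_addgt0Pr => eps /lim_l [K lim_K].
apply: le_trans (mdist_tri _ (u (maxn N K)) _) _.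
by rewrite mdist_sym addrC lerD ?le_c ?lim_K ?leq_maxl ?leq_maxr.
Qed.
End ProductMetric.

Section ZeroSet.
Context {L : language} {M : structure L} {n : nat} {Pr : ('I_n -> M) -> R}.
Hypothesis Pr_ge0 : forall x, 0 <= Pr x.
Hypothesis Pr_lip : forall x y, Pr x - Pr y <= mdist x y.
Hypothesis inf_sup_ge0 : forall r s : R, 0 <= r -> 0 <= s ->
  0 <= inf [set sup [set s * Pr x - r * Pr y - s * mdist x y
                    | y in [set: 'I_n -> M]]
           | x in [set: 'I_n -> M]].

Lemma exists_small_within x (d : R) : 0 < d ->
  exists y, Pr y <= d /\ mdist x y <= Pr x + d.
Proof.
move=> d_gt0; pose r := (Pr x + d) / d.
have Pr_x := Pr_ge0 x.
have r_gt0 : 0 < r by rewrite divr_gt0 //; lra.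
pose f z y := 1 * Pr z - r * Pr y - 1 * mdist z y.
have f_ub z : has_ubound [set f z y | y in [set: 'I_n -> M]].
  exists (Pr z) => _ [y _ <-]; rewrite /f.
  have := Pr_ge0 y; have := mdist_ge0 z y; nra.
have f_lb z : exists y, - r * (Pr x + n%:R) <= f z y.
  exists z; rewrite /f mdist_refl.
  have := Pr_lip z x; have := mdist_le_dim z x; have := Pr_ge0 z; nra.
have [y lt_y] :=
  inf_sup_ge0_witness f_ub f_lb (inf_sup_ge0 _ _ (ltW r_gt0) ler01) x _ d_gt0.
have Pr_y := Pr_ge0 y; have mdist_xy := mdist_ge0 x y.
exists y; split; last by rewrite /f in lt_y; nra.
have rd : r * d = Pr x + d by rewrite /r divfK ?gt_eqF.
have : r * Pr y <= r * d by rewrite /f in lt_y; lra.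
by rewrite ler_pM2l.
Qed.

Lemma exists_zero_within x (e : R) : 0 < e ->
  exists l, Pr l = 0 /\ mdist x l <= Pr x + 5 * e.
Proof.
move=> e_gt0.
have rho_gt0 k : 0 < e / 2 ^+ k by rewrite divr_gt0 ?exprn_gt0.
have [f f_jump] := choice (fun kz : nat * ('I_n -> M) =>
  exists_small_within kz.2 _ (rho_gt0 kz.1)).
pose u := fix u k := if k is k'.+1 then f (k, u k') else f (0%N, x).
have Pr_u k : Pr (u k) <= e / 2 ^+ k.
  by case: k => [|k]; [case: (f_jump (0%N, x)) | case: (f_jump (k.+1, u k))].
have x_u0 : mdist x (u 0%N) <= Pr x + e.
  by case: (f_jump (0%N, x)) => _; rewrite expr0 divr1.
have step k : mdist (u k) (u k.+1) <= 2 * e / 2 ^+ k.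
  case: (f_jump (k.+1, u k)) => _ /= le_u; apply: le_trans le_u _.
  have -> : e / 2 ^+ k.+1 = e / 2 ^+ k / 2.
    by rewrite exprS; field; rewrite gt_eqF ?exprn_gt0.
  have := Pr_u k; have := rho_gt0 k; lra.
have [l lim_l] := mdist_complete (geometric_mcauchy step).
have u_l k : mdist (u k) l <= 4 * e / 2 ^+ k.
  rewrite mdist_sym; apply: (mconverges_mdist_le k lim_l) => m km.
  by rewrite mdist_sym; have := mdist_geometric_tail step _ _ km; lra.
exists l; split.
  apply/le_anti; rewrite Pr_ge0 andbT; apply: (le0_geometric _ (5 * e)) => k.
  have := Pr_lip l (u k); have := Pr_u k; have := u_l k; rewrite mdist_sym; lra.
have := mdist_tri x (u 0%N) l; have := u_l 0%N; rewrite expr0 divr1; lra.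
Qed.
End ZeroSet.

Theorem mainTheorem15 (L : language) (M : structure L) (n : nat)
  (Pr : ('I_n -> M) -> R) :
  extremally_aleph0_saturated M ->
  definable_pred Pr ->
  (forall x : 'I_n -> M, 0 <= Pr x) ->
  (forall x y : 'I_n -> M, Pr x - Pr y <= mdist x y) ->
  (forall r s : R, 0 <= r -> 0 <= s ->
     0 <= inf [set sup [set s * Pr x - r * Pr y - s * mdist x y
                       | y in [set: 'I_n -> M]]
              | x in [set: 'I_n -> M]]) ->
  (exists a : 'I_n -> M, Pr a = 0) /\
  (forall x : 'I_n -> M, Pr x = dist_to_set x [set a | Pr a = 0]).
Proof.
move=> _ _ Pr_ge0 Pr_lip inf_sup_ge0.
have zero_within := exists_zero_within Pr_ge0 Pr_lip inf_sup_ge0.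
have [m0] := carrier_inhabited M.
have [a [Pa0 _]] := zero_within (fun=> m0) 1 ltr01.
split; first by exists a.
move=> x; apply/le_anti/andP; split.
  apply: lb_le_inf; first by exists (mdist x a), a.
  by move=> _ [y Py0 <-]; have := Pr_lip x y; rewrite Py0 subr0.
apply/ler_addgt0Pr => d d_gt0.
have [l [Pl0 le_l]] := zero_within x (d / 5) (divr_gt0 d_gt0 (ltr0n _ 5)).
rewrite mulrC divfK ?pnatr_eq0 // in le_l.
apply: le_trans le_l; apply: ge_inf; last by exists l.
by exists 0 => _ [y _ <-]; apply: mdist_ge0.
Qed.
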